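(* Let $n\in\mathbb N$ and $0<\alpha<\beta$. Then there exists $c=c(n,\alpha,\beta)>0$ such that $|P_{n,j,m}(\lambda)|\le c\beta^m$ whenever $m\in\mathbb Z_+$, $1\le j\le n$ and $\lambda\in\mathbb C^n$ satisfies $\max_{1\le r\le n}|\lambda_r|\le\alpha$.
   Context: For $\lambda=(\lambda_1,\dots,\lambda_n)\in\mathbb C^n$, $M_n(\lambda)$ is the Vandermonde matrix $(\lambda_j^{r-1})_{j,r=1}^n$. For $1\le j\le n$ and $m\in\mathbb Z_+$, $M_{n,j,m}(\lambda)$ is the matrix obtained from $M_n(\lambda)$ by replacing its $j$-th column $(\lambda_1^{j-1},\dots,\lambda_n^{j-1})^T$ by $(\lambda_1^m,\dots,\lambda_n^m)^T$. The polynomial $\det M_n(\lambda)=\prod_{1\le j<r\le n}(\lambda_r-\lambda_j)$ divides $\det M_{n,j,m}(\lambda)$ in $\mathbb C[\lambda_1,\dots,\lambda_n]$, and $P_{n,j,m}\in\mathbb C[\lambda_1,\dots,\lambda_n]$ denotes the quotient $\det M_{n,j,m}(\lambda)/\det M_n(\lambda)$. $\mathbb Z_+=\{0,1,2,\dots\}$. *)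

From HB Require Import structures.
From mathcomp Require Import all_boot all_order all_algebra.
From mathcomp Require Import reals complex mpoly.
From Stdlib Require Import ClassicalEpsilon.

Set Implicit Arguments. Unset Strict Implicit. Unset Printing Implicit Defensive.
Import Order.TTheory GRing.Theory Num.Theory.
Local Open Scope ring_scope.

Section Vdm.
Variable (R : realType) (n : nat).
Local Notation C := (R[i]).

(* Vandermonde matrix M_n(lambda) = (lambda_k^r)_{k,r}, rows indexed by the
   variable k, columns by the exponent r (0-indexed: column r <-> paper r+1). *)
Definition vdm : 'M[{mpoly C[n]}]_n := \matrix_(k < n, r < n) ('X_k ^+ r).

(* M_{n,j,m}: column j (0-indexed, i.e. paper column j+1, entries lambda^j)
   replaced by (lambda_k^m)_k. *)
Definition vdm_rep (j : 'I_n) (m : nat) : 'M[{mpoly C[n]}]_n :=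
  \matrix_(k < n, r < n) ('X_k ^+ (if r == j then m else r)).

(* P_{n,j,m}: the quotient det M_{n,j,m} / det M_n in C[lambda_1..lambda_n],
   i.e. the (unique) polynomial q with det M_{n,j,m} = det M_n * q. *)
Definition Pnjm (j : 'I_n) (m : nat) : {mpoly C[n]} :=
  epsilon (inhabits 0) (fun q => \det (vdm_rep j m) = \det vdm * q).
End Vdm.

From HB Require Import structures.
From mathcomp Require Import all_boot all_order all_algebra.
From mathcomp Require Import reals complex mpoly.
From mathcomp Require Import ring.
From Stdlib Require Import ClassicalEpsilon.

(* P_{n,j,m}(lam) is the coefficient of X^j in the remainder r of X^m modulo
   prod_k (X - lam_k): evaluating X^m = q * prod_k (X - lam_k) + r at the lam_k
   shows that the new column of M_{n,j,m} is M_n times the coefficient vector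
   of r, so det M_{n,j,m} = det M_n * r_j.  Adding a root mu to a list s of
   roots changes the remainder by t_m * prod_(x in s) (X - x), where
   t_{m+1} = (coefficient of the old remainder) + mu * t_m.  Since
   |mu| <= alpha < beta, this recurrence has solutions of size O(beta^m), and
   induction on the number of roots bounds every coefficient by K * beta^m. *)

Set Implicit Arguments. Unset Strict Implicit. Unset Printing Implicit Defensive.
Import Order.TTheory GRing.Theory Num.Theory.
Local Open Scope ring_scope.

Definition prod_XsubC (T : nzRingType) (s : seq T) : {poly T} :=
  \prod_(x <- s) ('X - x%:P).

Section ProdXsubC.
Variable T : comNzRingType.
Implicit Types (s : seq T) (x : T).

Lemma prod_XsubC_monic s : prod_XsubC s \is monic.
Proof. exact: monic_prod_XsubC. Qed.

Lemma size_prod_XsubC_seq s : size (prod_XsubC s) = (size s).+1.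
Proof. exact: size_prod_XsubC. Qed.

Lemma prod_XsubC_cons x s : prod_XsubC (x :: s) = ('X - x%:P) * prod_XsubC s.
Proof. by rewrite /prod_XsubC big_cons. Qed.

Lemma horner_prod_XsubC_mem s x : x \in s -> (prod_XsubC s).[x] = 0.
Proof. by move=> sx; rewrite horner_prod (big_rem x) //= hornerXsubC subrr mul0r. Qed.

End ProdXsubC.

Section RingRemainder.
Variable T : comNzRingType.
Implicit Types (s : seq T) (x : T).

Definition rremX s m := Pdiv.CommonRing.rmodp 'X^m (prod_XsubC s).

Lemma size_rremX s m : (size (rremX s m) <= size s)%N.
Proof.
have := Pdiv.CommonRing.ltn_rmodpN0 'X^m (monic_neq0 (prod_XsubC_monic s)).
by rewrite size_prod_XsubC_seq.
Qed.

Lemma horner_rremX s m x : x \in s -> (rremX s m).[x] = x ^+ m.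
Proof.
move=> sx; have := congr1 (horner^~ x) (Pdiv.RingMonic.rdivp_eq (prod_XsubC_monic s) 'X^m).
by rewrite hornerXn hornerD hornerM horner_prod_XsubC_mem // mulr0 add0r => ->.
Qed.

Lemma map_rremX (F : fieldType) (f : {rmorphism T -> F}) s m :
  map_poly f (rremX s m) = 'X^m %% prod_XsubC (map f s).
Proof.
have := congr1 (map_poly f) (Pdiv.RingMonic.rdivp_eq (prod_XsubC_monic s) 'X^m).
rewrite rmorphD rmorphM /= map_polyXn.
have -> : map_poly f (prod_XsubC s) = prod_XsubC (map f s).
  by rewrite rmorph_prod /prod_XsubC big_map; apply: eq_bigr => x _; exact: map_polyXsubC.
move/modpP; apply.
rewrite size_prod_XsubC_seq size_map ltnS map_polyE.
by rewrite (leq_trans (size_Poly _)) // size_map size_rremX.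
Qed.
End RingRemainder.

Section VandermondeColumn.
Variables (T : comNzRingType) (n : nat) (x : 'I_n -> T).

Definition vander_mx : 'M[T]_n := \matrix_(k, r) (x k ^+ r).

Definition vander_col_mx (j : 'I_n) (m : nat) : 'M[T]_n :=
  \matrix_(k, r) (x k ^+ (if r == j then m else r)).

Definition rem_col_mx (j : 'I_n) (m : nat) : 'M[T]_n :=
  \matrix_(s, r) (if r == j then (rremX (codom x) m)`_s else (s == r)%:R).

Lemma expr_rremX_sum k m : x k ^+ m = \sum_(r < n) (rremX (codom x) m)`_r * x k ^+ r.
Proof.
rewrite -(horner_rremX m (codom_f x k)); apply: horner_coef_wide.
by rewrite (leq_trans (size_rremX _ _)) // size_codom card_ord.
Qed.

Lemma vander_col_mxE j m : vander_col_mx j m = vander_mx *m rem_col_mx j m.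
Proof.
apply/matrixP => k r; rewrite !mxE.
under eq_bigr => s _ do rewrite !mxE.
have [_|ne] := eqVneq r j.
  by rewrite expr_rremX_sum; apply: eq_bigr => s _; rewrite mulrC.
rewrite (bigD1 r) //= big1 => [|s sr]; first by rewrite eqxx mulr1 addr0.
by rewrite (negbTE sr) mulr0.
Qed.

Lemma det_rem_col_mx j m : \det (rem_col_mx j m) = (rremX (codom x) m)`_j.
Proof.
rewrite (expand_det_row _ j) (bigD1 j) //= big1 ?addr0 => [|r rj]; last first.
  by rewrite !mxE (negbTE rj) eq_sym (negbTE rj) mul0r.
rewrite /cofactor; have -> : row' j (col' j (rem_col_mx j m)) = 1%:M.
  apply/matrixP => a b; rewrite !mxE eq_sym (negbTE (neq_lift _ _)).
  by rewrite (inj_eq (@lift_inj _ j)).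
by rewrite mxE eqxx det1 -signr_odd addnn odd_double expr0 mul1r mulr1.
Qed.

Lemma det_vander_col_mx j m :
  \det (vander_col_mx j m) = \det vander_mx * (rremX (codom x) m)`_j.
Proof. by rewrite vander_col_mxE det_mulmx det_rem_col_mx. Qed.

End VandermondeColumn.

Lemma mpolyXB_neq0 (R : nzRingType) n (i j : 'I_n) :
  i != j -> 'X_i - 'X_j != 0 :> {mpoly R[n]}.
Proof.
move=> ij; apply/eqP => /(congr1 (mcoeff U_(i))).
rewrite mcoeffB !mcoeffXU eqxx eq_sym (negbTE ij) subr0 mcoeff0.
by apply/eqP; exact: oner_neq0.
Qed.

Section VandermondeQuotient.
Variables (R : realType) (n : nat).
Local Notation X := (fun k : 'I_n => ('X_k : {mpoly R[i][n]})).

Lemma det_vdm_neq0 : \det (vdm R n) != 0.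
Proof.
have -> : vdm R n = (Vandermonde n (\row_k 'X_k))^T by apply/matrixP => k r; rewrite !mxE.
rewrite det_tr det_Vandermonde; apply/prodf_neq0 => i _; apply/prodf_neq0 => k ik.
by rewrite !mxE mpolyXB_neq0 // gt_eqF.
Qed.

Lemma Pnjm_rremX j m : Pnjm R j m = (rremX (codom X) m)`_j.
Proof.
have detE := det_vander_col_mx X j m.
have := epsilon_spec (inhabits 0)
  (fun q => \det (vdm_rep R j m) = \det (vdm R n) * q) (ex_intro _ _ detE).
by rewrite -/(Pnjm R j m) [LHS]detE => /(mulfI det_vdm_neq0).
Qed.

Lemma meval_Pnjm j m (lam : 'I_n -> R[i]) :
  (Pnjm R j m).@[lam] = ('X^m %% prod_XsubC (codom lam))`_j.
Proof.
rewrite Pnjm_rremX -coef_map map_rremX !codomE -map_comp.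
by congr (_ %% prod_XsubC _)`_j; apply: eq_map => k /=; rewrite mevalXU.
Qed.
End VandermondeQuotient.

Section FieldRemainder.
Variable F : fieldType.
Implicit Types (d p q u : {poly F}) (s : seq F).

Lemma modp_monic_size_le d u : d \is monic -> (size u <= size d)%N ->
  u %% d = u - u`_(size d).-1 *: d.
Proof.
move=> md ud; have d0 := monic_neq0 md.
have [k sd] : exists k, size d = k.+1.
  by exists (size d).-1; rewrite prednK // size_poly_gt0.
have dk : d`_k = 1 by rewrite -(monicP md) lead_coefE sd.
rewrite sd /=; apply/esym/(@modpP _ _ (u`_k)%:P); first by rewrite mul_polyC addrC subrK.
rewrite sd ltnS; apply/leq_sizeP => i; rewrite leq_eqVlt => /orP[/eqP <-|ki].
  by rewrite coefB coefZ dk mulr1 subrr.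
have ui : (size u <= i)%N by rewrite (leq_trans ud) // sd.
have di : (size d <= i)%N by rewrite sd.
by rewrite coefB coefZ (nth_default 0 ui) (nth_default 0 di) mulr0 subr0.
Qed.

Lemma modp_modp_dvdp p q d : d %| q -> (p %% q) %% d = p %% d.
Proof.
by move/dvdpP => [c ->]; rewrite {2}(divp_eq p (c * d)) mulrA modpD modp_mull add0r.
Qed.

Definition remX s m := 'X^m %% prod_XsubC s.

Lemma size_remX s m : (size (remX s m) <= size s)%N.
Proof.
have := ltn_modpN0 'X^m (monic_neq0 (prod_XsubC_monic s)).
by rewrite size_prod_XsubC_seq.
Qed.

Variables (mu : F) (s : seq F).
Local Notation k := (size s).
Local Notation t m := ((remX (mu :: s) m)`_k).

Lemma remX_cons m : remX (mu :: s) m = remX s m + t m *: prod_XsubC s.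
Proof.
have srem : (size (remX (mu :: s) m) <= size (prod_XsubC s))%N.
  by rewrite size_prod_XsubC_seq size_remX.
have := modp_monic_size_le (prod_XsubC_monic s) srem.
rewrite modp_modp_dvdp ?prod_XsubC_cons ?dvdp_mull // size_prod_XsubC_seq /=.
by rewrite -/(remX s m) => ->; rewrite subrK.
Qed.

Lemma coef_remX_cons0 : t 0 = (k == 0%N)%:R.
Proof.
by rewrite /remX expr0 modp_small ?coef1 // size_poly1 size_prod_XsubC_seq.
Qed.

Lemma coef_remX_consS m : t m.+1 = ('X * remX s m)`_k + mu * t m.
Proof.
have sXr : (size ('X * remX s m)%R <= k.+1)%N.
  by rewrite mulrC (leq_trans (size_polyMleq _ _)) // size_polyX addn2 ltnS size_remX.
have sQ : (size (t m * mu *: prod_XsubC s)%R <= k.+1)%N.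
  by rewrite (leq_trans (size_scale_leq _ _)) // size_prod_XsubC_seq.
have eX : 'X * remX (mu :: s) m =
    ('X * remX s m + (t m * mu) *: prod_XsubC s) + (t m)%:P * prod_XsubC (mu :: s).
  by rewrite [in LHS]remX_cons prod_XsubC_cons -!mul_polyC polyCM; ring.
have -> : remX (mu :: s) m.+1 = 'X * remX s m + (t m * mu) *: prod_XsubC s.
  rewrite /remX exprS -modp_mul -/(remX (mu :: s) m) eX modpD modp_mull addr0.
  rewrite modp_small // size_prod_XsubC_seq ltnS.
  by rewrite (leq_trans (size_polyD _ _)) // geq_max sXr.
have Qk : (prod_XsubC s)`_k = 1.
  by have := monicP (prod_XsubC_monic s); rewrite lead_coefE size_prod_XsubC_seq.
by rewrite coefD coefZ Qk mulr1 [_ * mu]mulrC.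
Qed.
End FieldRemainder.

Section RemainderBounds.
Variable F : numFieldType.
Implicit Types (a b K : F) (s : seq F).

Lemma norm_coef_prod_XsubC_le a s : 0 <= a -> {in s, forall x, `|x| <= a} ->
  forall i, `|(prod_XsubC s)`_i| <= (1 + a) ^+ size s.
Proof.
move=> a0; elim: s => [_ i|x s IH sa i].
  by rewrite /prod_XsubC big_nil coefC; case: eqP; rewrite ?normr1 ?normr0.
have {}IH : forall i, `|(prod_XsubC s)`_i| <= (1 + a) ^+ size s.
  by apply: IH => y ys; apply: sa; rewrite inE ys orbT.
rewrite prod_XsubC_cons mulrBl coefB coefXM coefCM exprS mulrDl mul1r.
rewrite (le_trans (ler_normB _ _)) // lerD //.
  by case: eqP; rewrite ?normr0 ?exprn_ge0 ?addr_ge0.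
by rewrite normrM ler_pM ?sa ?mem_head.
Qed.

Lemma geometric_recurrence_le a b K (v : nat -> F) :
  0 <= a -> a < b -> 0 <= K -> v 0%N <= 1 ->
  (forall m, v m.+1 <= K * b ^+ m + a * v m) ->
  forall m, v m <= (K / (b - a) + 1) * b ^+ m.
Proof.
move=> a0 ab K0 v0 vS; set L := K / (b - a) + 1.
have ba0 : 0 < b - a by rewrite subr_gt0.
have KL : K + a * L <= b * L.
  have e : (b - a) * L = K + (b - a) by rewrite /L mulrDr mulr1 mulrC divfK ?gt_eqF.
  by rewrite -[b * L](subrK (a * L)) -mulrBl e lerD2r lerDl ltW.
have bm0 m : 0 <= b ^+ m by rewrite exprn_ge0 // (le_trans a0) ?ltW.
elim=> [|m IH]; first by rewrite expr0 mulr1 (le_trans v0) // lerDr divr_ge0 // ltW.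
rewrite (le_trans (vS m)) // (le_trans (lerD (lexx _) (ler_wpM2l a0 IH))) //.
by rewrite mulrA -mulrDl exprS mulrA [L * b]mulrC ler_wpM2r.
Qed.

Lemma norm_coef_remX_le a b k : 0 <= a -> a < b ->
  exists K, 0 <= K /\ forall s, size s = k -> {in s, forall x, `|x| <= a} ->
    forall m i, `|(remX s m)`_i| <= K * b ^+ m.
Proof.
move=> a0 ab; have bm0 m : 0 <= b ^+ m by rewrite exprn_ge0 // (le_trans a0) ?ltW.
elim: k => [|k [K [K0 IH]]].
  exists 0; split => // -[|//] _ _ m i.
  by rewrite /remX /prod_XsubC big_nil modp1 coef0 normr0 mul0r.
pose L := K / (b - a) + 1.
have L0 : 0 <= L by rewrite addr_ge0 // divr_ge0 // subr_ge0 ltW.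
exists (K + L * (1 + a) ^+ k).
split; first by rewrite addr_ge0 // mulr_ge0 // exprn_ge0 // addr_ge0.
case=> [//|mu s] [sk] sa m i.
have mu_le : `|mu| <= a by apply: sa; rewrite mem_head.
have {}sa : {in s, forall x, `|x| <= a} by move=> x xs; apply: sa; rewrite inE xs orbT.
have t_le : forall m, `|(remX (mu :: s) m)`_(size s)| <= L * b ^+ m.
  apply: geometric_recurrence_le => // [|m'].
    by rewrite coef_remX_cons0; case: eqP; rewrite ?normr1 ?normr0 ?ler01.
  rewrite coef_remX_consS (le_trans (ler_normD _ _)) // lerD //.
    by rewrite coefXM; case: eqP => _; rewrite ?normr0 ?mulr_ge0 ?IH.
  by rewrite normrM ler_wpM2r.
rewrite remX_cons coefD coefZ (le_trans (ler_normD _ _)) // mulrDl lerD ?IH //.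
by rewrite normrM mulrAC ler_pM // -sk norm_coef_prod_XsubC_le.
Qed.
End RemainderBounds.

Theorem lemma4p3 (R : realType) (n : nat) (alpha beta : R) :
  0 < alpha -> alpha < beta ->
  exists c : R, 0 < c /\
    forall (m : nat) (j : 'I_n) (lam : 'I_n -> R[i]),
      (forall r : 'I_n, `|lam r| <= (alpha%:C)%C) ->
      `|(Pnjm R j m).@[lam]| <= ((c * beta ^+ m)%:C)%C.
Proof.
move=> alpha_gt0 alpha_lt_beta.
have alphaC_ge0 : 0 <= (alpha%:C)%C :> R[i] by rewrite ler0c ltW.
have alphaC_lt : (alpha%:C)%C < (beta%:C)%C :> R[i] by rewrite ltcR.
have [K [K_ge0 remX_le]] := norm_coef_remX_le n alphaC_ge0 alphaC_lt.
have /complex_realP [k Kk] := ger0_real K_ge0.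
have k_ge0 : 0 <= k by rewrite -ler0c -Kk.
exists (k + 1); split; first by rewrite ltr_wpDl.
move=> m j lam lam_le; rewrite meval_Pnjm.
apply: le_trans (remX_le _ _ _ m j) _.
- by rewrite size_codom card_ord.
- by move=> _ /codomP [r ->].
rewrite Kk -rmorphXn -rmorphM lecR ler_wpM2r ?lerDl //.
by rewrite exprn_ge0 // (le_trans (ltW alpha_gt0)) ?ltW.
Qed.
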